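(* Let $T>0$, $A\in C([0,T];\mathbb{R}^{n\times n})$, $B\in C([0,T];\mathbb{R}^{n\times m})$, $E\in C([0,T];\mathbb{R}^{n\times\ell})$, and compact convex nonempty $\mathbb{U}\subset\mathbb{R}^m$, $\mathbb{D}\subset\mathbb{R}^\ell$. Assume that for every $t\in[0,T]$ the set $\mathbb{W}(t)=B(t)\mathbb{U}\ominus(-E(t)\mathbb{D})$ is nonempty. Let $L_g\ge0$, $\gamma_k\in\mathbb{R}$, $n_k\in\mathbb{N}$, points $\bar x_{i,k}\in\mathbb{R}^n$ and controls $\omega_{i,k}\in\mathscr{W}[0,T]$ ($1\le i\le n_k$) be given, let $\xi^\star_{i,k}$ be the solution on $[0,T]$ of $\dot\xi(s)=A(s)\xi(s)+\omega_{i,k}(s)$, $\xi(T)=\bar x_{i,k}$, and $\Omega^\star_k(t)=\mathrm{conv}(\{\xi^\star_{i,k}(t)\}_{i=1}^{n_k})$. Then $\bar v_k(t,x)=L_g\inf_{\xi\in\Omega^\star_k(t)}\|\Phi_A(T,t)(x-\xi)\|+\gamma_k$ is continuous on $[0,T]\times\mathbb{R}^n$.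
   Context: $\Phi_A(s,\tau)$ is the state-transition matrix of $\dot y(s)=A(s)y(s)$. For $Y,Z\subseteq\mathbb{R}^n$: $Y\ominus Z=\{c:\{c\}\oplus Z\subseteq Y\}$ where $\{c\}\oplus Z=\{c+z:z\in Z\}$, and $PY=\{Py:y\in Y\}$. $\mathscr{W}[0,T]$ is the set of measurable $\omega:[0,T]\to\mathbb{R}^n$ with $\omega(s)\in\mathbb{W}(s)$ for all $s$. *)

From HB Require Import structures.
From mathcomp Require Import all_boot all_order all_algebra.
From mathcomp Require Import all_classical all_reals all_analysis.
Set Implicit Arguments. Unset Strict Implicit. Unset Printing Implicit Defensive.
Import Order.TTheory GRing.Theory Num.Theory.
Import numFieldNormedType.Exports.
Local Open Scope classical_set_scope.
Local Open Scope ring_scope.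

Section Defs.
Variable R : realType.
Notation leb := (@lebesgue_measure R).

Definition enorm n (x : 'cV[R]_n) : R := Num.sqrt (\sum_i (x i 0) ^+ 2).

Definition mx_image p q (P : 'M[R]_(p, q)) (Y : set 'cV[R]_q) : set 'cV[R]_p :=
  [set P *m y | y in Y].

Definition mink_diff p (Y Z : set 'cV[R]_p) : set 'cV[R]_p :=
  [set c | forall z, Z z -> Y (c + z)].

Definition conv_pts p N (pts : 'I_N -> 'cV[R]_p) : set 'cV[R]_p :=
  [set c | exists lam : 'I_N -> R, (forall i, 0 <= lam i) /\
     \sum_i lam i = 1 /\ c = \sum_i lam i *: pts i].

Definition oint (a b : R) (f : R -> R) : R :=
  if a <= b then Rintegral leb `[a, b] f else - Rintegral leb `[b, a] f.

(* Phi is the state-transition matrix of y' = A y on [0,T]: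
   for each tau in [0,T], s |-> Phi s tau solves Y' = A Y, Y(tau)=I on [0,T]
   (in integral form; A is continuous so this is the classical solution). *)
Definition is_stm n (T : R) (A : R -> 'M[R]_n) (Phi : R -> R -> 'M[R]_n) : Prop :=
  forall tau, 0 <= tau <= T ->
    (forall i j, leb.-integrable `[0, T] (fun r => ((A r *m Phi r tau) i j)%:E)) /\
    forall s, 0 <= s <= T -> forall i j,
      Phi s tau i j = (1%:M : 'M[R]_n) i j + oint tau s (fun r => (A r *m Phi r tau) i j).

(* xi is the (Caratheodory) solution on [0,T] of xi' = A xi + w, xi(T) = xbar *)
Definition is_sol n (T : R) (A : R -> 'M[R]_n) (w : R -> 'cV[R]_n)
  (xbar : 'cV[R]_n) (xi : R -> 'cV[R]_n) : Prop :=
  (forall j, leb.-integrable `[0, T] (fun s => ((A s *m xi s + w s) j 0)%:E)) /\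
  forall t, 0 <= t <= T -> forall j,
    xi t j 0 = xbar j 0 + oint T t (fun s => (A s *m xi s + w s) j 0).

Definition adm_ctrl n (T : R) (W : R -> set 'cV[R]_n) (w : R -> 'cV[R]_n) : Prop :=
  (forall j, measurable_fun `[0, T] (fun s => w s j 0)) /\
  forall s, 0 <= s <= T -> W s (w s).

End Defs.

From HB Require Import structures.
From mathcomp Require Import all_boot all_order all_algebra.
From mathcomp Require Import all_classical all_reals all_analysis.
From mathcomp Require Import ring lra.
Import Order.TTheory GRing.Theory Num.Theory.
Import numFieldNormedType.Exports.
Local Open Scope classical_set_scope.
Local Open Scope ring_scope.
Set Implicit Arguments. Unset Strict Implicit. Unset Printing Implicit Defensive.

(** Write [v(t, x) = Lg * d(Phi(T,t) x, (Phi(T,t) xi_i(t))_i) + gam], where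
    [d(y, v) = inf_{lam in simplex} |y - sum_i lam_i v_i|].  Since the Euclidean norm is
    dominated by the l1 norm and the weights lie in [0, 1], [d] is 1-Lipschitz for the l1
    distances of [y] and of the [v_i]; so it suffices that [t |-> Phi(T,t)] and the [xi_i]
    are continuous.  The [xi_i] are continuous by their integral equation.  For [Phi],
    uniqueness for the homogeneous equation [Z(s) = int_tau^s A Z] gives
    [Phi(s,tau) Phi(tau,0) = Phi(s,0)], hence [Phi(T,t) = Phi(T,0) Phi(t,0)^-1], and the
    inverse of a matrix is continuous where it exists (adjugate formula).  Uniqueness is a
    Gronwall-type argument: near a zero of the continuous majorant [g = |Z|_1], the
    maximum of [g] on a short window is at most half of itself, so zeros spread along
    [0, T] in steps of fixed length. *)

Section within_continuity.
Context {T : topologicalType} {R : realType} (A : set T).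

Lemma within_continuousM (f g : T -> R) :
  {within A, continuous f} -> {within A, continuous g} ->
  {within A, continuous (fun x => f x * g x)}.
Proof. by move=> cf cg x; apply: cvgM; [exact: cf|exact: cg]. Qed.

Lemma within_continuous_sum (I : Type) (r : seq I) (f : I -> T -> R) :
  (forall i, {within A, continuous (f i)}) ->
  {within A, continuous (fun x => \sum_(i <- r) f i x)}.
Proof.
by move=> cf x; apply: cvg_big => [|i _]; [exact: add_continuous|exact: cf].
Qed.

Lemma within_continuous_coord m n (M : T -> 'M[R]_(m, n)) i j :
  {within A, continuous M} -> {within A, continuous (fun x => M x i j)}.
Proof.
move=> cM x; apply: (@cvg_comp _ _ _ M (fun N : 'M[R]_(m, n) => N i j)) (cM x) _.
exact: coord_continuous.
Qed.

Lemma within_continuous_mulmx m n p (M : T -> 'M[R]_(m, n)) (N : T -> 'M[R]_(n, p)) :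
  (forall i j, {within A, continuous (fun x => M x i j)}) ->
  (forall i j, {within A, continuous (fun x => N x i j)}) ->
  forall i j, {within A, continuous (fun x => (M x *m N x) i j)}.
Proof.
move=> cM cN i j.
have -> : (fun x => (M x *m N x) i j) = (fun x => \sum_k M x i k * N x k j).
  by apply/funext => x; rewrite mxE.
by apply: within_continuous_sum => k; exact: within_continuousM.
Qed.

End within_continuity.

Lemma within_continuous_comp_mapsto {X Y Z : topologicalType} (A : set X) (B : set Y)
    (f : X -> Y) (g : Y -> Z) :
  continuous f -> f @` A `<=` B -> {within B, continuous g} ->
  {within A, continuous (g \o f)}.
Proof.
move=> cf fAB /subspace_continuousP cg; apply/subspace_continuousP => x Ax.
have fAx : f @ within A (nbhs x) --> within B (nbhs (f x)).
  move=> Q; rewrite !nbhs_simpl => /cf fBQ.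
  change (\forall z \near x, A z -> Q (f z)).
  have {}fBQ : \forall z \near x, B (f z) -> Q (f z) := fBQ.
  by near=> z => Az; apply: (near fBQ z) => //; apply: fAB; exists z.
exact: (@cvg_comp _ _ _ f g _ _ _ fAx (cg _ (fAB _ (imageP _ Ax)))).
Unshelve. all: by end_near. Qed.

Section matrix_limits.
Context {R : realType} {X : Type} (F : set_system X) {FF : Filter F}.

Lemma cvg_det k (M : X -> 'M[R]_k) (L : 'M[R]_k) :
  (forall i j, M x i j @[x --> F] --> L i j) -> \det (M x) @[x --> F] --> \det L.
Proof.
move=> cM; rewrite /determinant; under eq_fun do rewrite /determinant.
apply: cvg_big => [|s _]; first exact: add_continuous.
apply: cvgM; first exact: cvg_cst.
by apply: cvg_big => [|i _]; [exact: mul_continuous|exact: cM].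
Qed.

Lemma cvg_invmx k (M : X -> 'M[R]_k) (L : 'M[R]_k) :
  (\forall x \near F, M x \in unitmx) -> L \in unitmx ->
  (forall i j, M x i j @[x --> F] --> L i j) ->
  forall i j, invmx (M x) i j @[x --> F] --> invmx L i j.
Proof.
move=> Mu Lu cM i j.
have adjE (N : 'M[R]_k) : N \in unitmx ->
    invmx N i j = (\det N)^-1 * ((-1) ^+ (j + i) * \det (row' j (col' i N))).
  by move=> Nu; rewrite /invmx Nu !mxE.
have nearE : \forall x \near F,
    (\det (M x))^-1 * ((-1) ^+ (j + i) * \det (row' j (col' i (M x)))) =
    invmx (M x) i j.
  by near=> x; rewrite adjE //; near: x.
rewrite adjE //; apply: cvg_trans (near_eq_cvg nearE) _.
apply: cvgM; last apply: cvgM; first apply: cvgV.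
- by rewrite -unitfE -unitmxE.
- exact: cvg_det.
- exact: cvg_cst.
- by apply: cvg_det => a b; under eq_fun do rewrite !mxE; rewrite !mxE; exact: cM.
Unshelve. all: by end_near. Qed.

End matrix_limits.

Section Rintegral_sum.
Context d (X : measurableType d) {R : realType} (mu : {measure set X -> \bar R}).
Context (D : set X) (mD : measurable D) (I : Type) (f : I -> X -> R).
Hypothesis intf : forall k, mu.-integrable D (EFin \o f k).

Lemma integrable_sumR (r : seq I) :
  mu.-integrable D (EFin \o (fun x => \sum_(k <- r) f k x)).
Proof.
apply: eq_integrable (integrable_sum mD r (fun k _ => intf k)) => // x _.
by rewrite /= sumEFin.
Qed.

Lemma Rintegral_sum (r : seq I) :
  Rintegral mu D (fun x => \sum_(k <- r) f k x) = \sum_(k <- r) Rintegral mu D (f k).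
Proof.
elim: r => [|k r IH].
  by rewrite big_nil; under eq_Rintegral do rewrite big_nil; rewrite Rintegral_cst // mul0r.
under eq_Rintegral do rewrite big_cons.
by rewrite big_cons RintegralD // ?IH //; exact: integrable_sumR.
Qed.

End Rintegral_sum.

Section oriented_integral.
Context {R : realType} (T : R).
Local Notation leb := (@lebesgue_measure R).
Local Notation prim := (parameterized_integral leb 0).
Implicit Types (f g : R -> R) (a b c s : R).

Lemma integrable_subitv f a b : leb.-integrable `[0, T] (EFin \o f) ->
  0 <= a -> b <= T -> leb.-integrable `[a, b] (EFin \o f).
Proof.
by move=> intf a0 bT; apply: integrableS intf => //; apply: subset_itv; rewrite bnd_simp.
Qed.

Lemma Rintegral_itv_prim f a b : leb.-integrable `[0, T] (EFin \o f) ->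
  0 <= a -> a <= b -> b <= T -> Rintegral leb `[a, b] f = prim b f - prim a f.
Proof.
move=> intf a0 ab bT.
rewrite -Rintegral_itv_obnd_cbnd; last first.
  apply: integrableS (integrable_subitv intf a0 bT) => //.
  by apply: subset_itv; rewrite bnd_simp.
rewrite -(@Rintegral_itvB R f (BLeft 0) (BRight b) a) //; exact: integrable_subitv.
Qed.

Lemma ointE f a b : leb.-integrable `[0, T] (EFin \o f) ->
  0 <= a <= T -> 0 <= b <= T -> oint a b f = prim b f - prim a f.
Proof.
move=> intf /andP[a0 aT] /andP[b0 bT]; rewrite /oint.
case: ifPn => [ab|/negbTE ba]; first exact: Rintegral_itv_prim.
by rewrite Rintegral_itv_prim ?opprB // ltW // ltNge ba.
Qed.

Lemma within_continuous_oint f a : leb.-integrable `[0, T] (EFin \o f) ->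
  0 <= a <= T -> {within `[0, T], continuous (fun s => oint a s f)}.
Proof.
move=> intf aT; have T0 : 0 <= T by case/andP: aT => /le_trans; apply.
apply: (@subspace_eq_continuous _ _ _ (fun s => prim s f - prim a f)).
  by move=> s; rewrite inE /= in_itv /= => sT; rewrite [RHS]ointE.
apply: within_continuousB; first exact: parameterized_integral_continuous.
by move=> s; exact: cvg_cst.
Qed.

Lemma ler_norm_Rintegral_itv f a b c : leb.-integrable `[a, b] (EFin \o f) ->
  a <= b -> 0 <= c -> (forall r, a <= r <= b -> `|f r| <= c) ->
  `|Rintegral leb `[a, b] f| <= (b - a) * c.
Proof.
move=> intf ab c0 fc; case/integrableP: (intf) => mf _.
rewrite -lee_fin /Rintegral -abse_EFin fineK; last exact: integrable_fin_num.
apply: le_trans (le_abse_integral _ _ mf) _ => //.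
apply: le_trans (integral_le_bound (c%:E) _ mf _ _) _ => //.
  by apply: aeW => r /=; rewrite in_itv /= lee_fin; exact: fc.
suff : forall m, m = (b - a)%:E -> (c%:E * m <= ((b - a) * c)%:E)%E.
  apply; apply: eq_trans (lebesgue_measure_itv `[a, b]) _ => /=.
  by rewrite lte_fin; case: ltgtP ab => // -> _; rewrite subrr.
by move=> _ ->; rewrite -EFinM lee_fin mulrC.
Qed.

Lemma ler_norm_oint f a s c : leb.-integrable `[0, T] (EFin \o f) ->
  0 <= a <= T -> 0 <= s <= T -> 0 <= c ->
  (forall r, 0 <= r <= T -> `|r - a| <= `|s - a| -> `|f r| <= c) ->
  `|oint a s f| <= `|s - a| * c.
Proof.
move=> intf /andP[a0 aT] /andP[s0 sT] c0 fc; rewrite /oint.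
case: ifPn => [as_|/negbTE sa].
  rewrite [`|s - a|]ger0_norm ?subr_ge0 //.
  apply: ler_norm_Rintegral_itv => //; first exact: integrable_subitv.
  move=> r /andP[ar rs]; apply: fc; first by rewrite (le_trans a0 ar) (le_trans rs sT).
  by rewrite !ger0_norm ?subr_ge0 // lerD2r.
have {}sa : s <= a by rewrite ltW // ltNge sa.
rewrite normrN [`|s - a|]ler0_norm ?subr_le0 // opprB.
apply: ler_norm_Rintegral_itv => //; first exact: integrable_subitv.
move=> r /andP[sr ra]; apply: fc; first by rewrite (le_trans s0 sr) (le_trans ra aT).
by rewrite !ler0_norm ?subr_le0 // !opprB lerD2l lerN2.
Qed.

Lemma integrable_lincomb (J : Type) (r : seq J) (f : J -> R -> R) (w : J -> R) g :
  (forall k, leb.-integrable `[0, T] (EFin \o f k)) ->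
  leb.-integrable `[0, T] (EFin \o g) ->
  leb.-integrable `[0, T] (EFin \o (fun x => \sum_(k <- r) f k x * w k - g x)).
Proof.
move=> intf intg.
have intfw k : leb.-integrable `[0, T] (EFin \o (fun x => f k x * w k)).
  exact: eq_integrable (integrableZr _ (w k) (intf k)) => //.
exact: eq_integrable (integrableB _ (integrable_sumR _ intfw r) intg) => //.
Qed.

Lemma oint_lincomb (J : Type) (r : seq J) (f : J -> R -> R) (w : J -> R) g a b :
  (forall k, leb.-integrable `[0, T] (EFin \o f k)) ->
  leb.-integrable `[0, T] (EFin \o g) -> 0 <= a <= T -> 0 <= b <= T ->
  oint a b (fun x => \sum_(k <- r) f k x * w k - g x) =
  \sum_(k <- r) oint a b (f k) * w k - oint a b g.
Proof.
move=> intf intg aT bT.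
have primE x : 0 <= x <= T ->
    prim x (fun y => \sum_(k <- r) f k y * w k - g y) =
    \sum_(k <- r) prim x (f k) * w k - prim x g.
  case/andP=> x0 xT.
  have intx h : leb.-integrable `[0, T] (EFin \o h) ->
      leb.-integrable `[0, x] (EFin \o h) by move=> /integrable_subitv; apply.
  have intfw k : leb.-integrable `[0, x] (EFin \o (fun y => f k y * w k)).
    exact: eq_integrable (integrableZr _ (w k) (intx _ (intf k))) => //.
  rewrite /parameterized_integral RintegralB //; last 2 first.
  - exact: integrable_sumR.
  - exact: intx.
  rewrite (Rintegral_sum _ intfw r) //; congr (_ - _).
  by apply: eq_bigr => k _; rewrite RintegralZr //; exact: intx.
rewrite !(ointE _ aT bT) //; last exact: integrable_lincomb.
have -> : \sum_(k <- r) oint a b (f k) * w k =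
    \sum_(k <- r) prim b (f k) * w k - \sum_(k <- r) prim a (f k) * w k.
  by rewrite -sumrB; apply: eq_bigr => k _; rewrite ointE // mulrBl.
by rewrite !primE //; ring.
Qed.

Lemma oint_id (a : R) f : oint a a f = 0.
Proof. by rewrite /oint lexx set_itv1 Rintegral_set1. Qed.

Lemma oint_chasles f a b c : leb.-integrable `[0, T] (EFin \o f) ->
  0 <= a <= T -> 0 <= b <= T -> 0 <= c <= T ->
  oint a b f + oint b c f = oint a c f.
Proof. by move=> intf aT bT cT; rewrite !(ointE intf) //; ring. Qed.

Lemma within_continuous_integral_form (u f : R -> R) u0 a :
  leb.-integrable `[0, T] (EFin \o f) -> 0 <= a <= T ->
  (forall s, 0 <= s <= T -> u s = u0 + oint a s f) ->
  {within `[0, T], continuous u}.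
Proof.
move=> intf aT uE; apply: (@subspace_eq_continuous _ _ _ (fun s => u0 + oint a s f)).
  by move=> s; rewrite inE /= in_itv /= => sT; rewrite [RHS]uE.
by apply: within_continuousD; [move=> ?; exact: cvg_cst|exact: within_continuous_oint].
Qed.

End oriented_integral.

Section gronwall.
Context {R : realType} (T C : R) (g : R -> R).
Hypotheses (gc : {within `[0, T], continuous g}) (g_ge0 : forall r, 0 <= g r).
Hypothesis C_ge0 : 0 <= C.
Hypothesis g_le : forall a s c, 0 <= a <= T -> 0 <= s <= T -> g a = 0 ->
  (forall r, 0 <= r <= T -> `|r - a| <= `|s - a| -> g r <= c) ->
  g s <= C * `|s - a| * c.

Let h := (2 * (C + 1))^-1.

Let h_gt0 : 0 < h.
Proof. by rewrite invr_gt0 mulr_gt0 // ltr_wpDl. Qed.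

(* On the window [[a - h, a + h]] the maximum [g r0] of [g] satisfies
   [g r0 <= C h g r0 <= g r0 / 2]. *)
Let gronwall_local a : 0 <= a <= T -> g a = 0 ->
  forall s, 0 <= s <= T -> `|s - a| <= h -> g s = 0.
Proof.
move=> aT ga0.
pose lo := Num.max 0 (a - h); pose hi := Num.min T (a + h).
have inI r : (r \in `[lo, hi]) = (0 <= r <= T) && (`|r - a| <= h).
  rewrite in_itv /= ge_max le_min ler_distl.
  by case: (0 <= r); case: (a - h <= r); case: (r <= T); case: (r <= a + h).
have lohi : lo <= hi.
  have : a \in `[lo, hi] by rewrite inI aT subrr normr0 ltW.
  by rewrite in_itv /= => /andP[]; exact: le_trans.
have sub0T : `[lo, hi] `<=` `[0, T].
  by move=> r; rewrite /= inI in_itv /= => /andP[].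
have [r0 r0I r0max] := EVT_max lohi (continuous_subspaceW sub0T gc).
move: (r0I); rewrite inI => /andP[r0T r0a].
have gr0_le : g r0 <= C * h * g r0.
  apply: le_trans (g_le aT r0T ga0 _) _.
    move=> r rT ra; apply: r0max; rewrite inI rT; exact: le_trans ra r0a.
  by rewrite ler_wpM2r // ler_wpM2l.
have Ch : C * h <= 2^-1.
  rewrite /h invfM mulrA ler_pdivrMr ?ltr_wpDl //.
  by rewrite mulrC ler_wpM2l ?invr_ge0 // lerDl.
have gr0 : g r0 = 0.
  have : g r0 <= 2^-1 * g r0 by apply: le_trans gr0_le _; exact: ler_wpM2r.
  by have := g_ge0 r0; lra.
move=> s sT sa; apply/eqP; rewrite eq_le g_ge0 andbT -gr0.
by apply: r0max; rewrite inI sT.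
Qed.

Lemma gronwall_zero tau0 : 0 <= tau0 <= T -> g tau0 = 0 ->
  forall s, 0 <= s <= T -> g s = 0.
Proof.
move=> tT gt0.
have chain (N : nat) s : 0 <= s <= T -> `|s - tau0| <= N%:R * h -> g s = 0.
  elim: N s => [|N IH] s sT sN.
    by move: sN; rewrite mul0r normr_le0 subr_eq0 => /eqP ->.
  pose t : R := N.+1%:R^-1.
  have t0 : 0 < t by rewrite invr_gt0.
  have t1 : t <= 1 by rewrite invf_le1 // ler1n.
  have Nt : N%:R = N.+1%:R - 1 :> R by rewrite -natr1 addrK.
  have kt : N.+1%:R * t = 1 by rewrite mulfV.
  (* [a] lies between [s] and [tau0], within [N h] of [tau0] and within [h] of [s]. *)
  pose a := s + (tau0 - s) * t.
  have aT : 0 <= a <= T.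
    by move: sT tT => /andP[? ?] /andP[? ?]; rewrite /a; apply/andP; split; nra.
  apply: (gronwall_local aT (IH a aT _)) => //.
    have -> : a - tau0 = (s - tau0) * (1 - t) by rewrite /a; ring.
    rewrite normrM [`|1 - t|]ger0_norm ?subr_ge0 //.
    apply: le_trans (ler_wpM2r _ sN) _; first by rewrite subr_ge0.
    by rewrite Nt mulrBr mulr1 mulrAC kt mul1r mulrBl mul1r.
  have -> : s - a = (s - tau0) * t by rewrite /a; ring.
  rewrite normrM [`|t|]gtr0_norm //.
  by apply: le_trans (ler_wpM2r (ltW t0) sN) _; rewrite mulrAC kt mul1r.
move=> s sT.
have st0 : 0 <= `|s - tau0| / h by rewrite divr_ge0 // ltW.
apply: (chain (Num.Def.archi_bound (`|s - tau0| / h))) => //.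
by rewrite -ler_pdivrMr //; apply: ltW; exact: archi_boundP.
Qed.

End gronwall.

Section mx_l1.
Context {R : realType} (p q : nat).
Implicit Types M N : 'M[R]_(p, q).

Definition mx_l1 M : R := \sum_i \sum_j `|M i j|.

Lemma mx_l1_ge0 M : 0 <= mx_l1 M.
Proof. by do 2 apply: sumr_ge0 => ? _. Qed.

Lemma ler_coord_mx_l1 M i j : `|M i j| <= mx_l1 M.
Proof.
have le_sum (I : finType) (F : I -> R) k : (forall l, 0 <= F l) -> F k <= \sum_l F l.
  by move=> F0; rewrite (bigD1 k) //= lerDl sumr_ge0.
apply: le_trans (le_sum _ (fun i => \sum_j `|M i j|) i _); last by move=> ?; exact: sumr_ge0.
exact: le_sum.
Qed.

Lemma mx_l1_0 : mx_l1 0 = 0.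
Proof. by rewrite /mx_l1 big1 // => i _; rewrite big1 // => j _; rewrite mxE normr0. Qed.

Lemma mx_l1_eq0 M : mx_l1 M = 0 -> M = 0.
Proof.
move=> M0; apply/matrixP => i j; rewrite mxE.
by apply/eqP; rewrite -normr_le0 -M0 ler_coord_mx_l1.
Qed.

Lemma within_continuous_mx_l1 {X : topologicalType} (A : set X) (M : X -> 'M[R]_(p, q)) :
  (forall i j, {within A, continuous (fun x => M x i j)}) ->
  {within A, continuous (fun x => mx_l1 (M x))}.
Proof.
move=> cM; do 2 apply: within_continuous_sum => ?.
by move=> x; apply: cvg_norm; exact: cM.
Qed.

Lemma within_continuous_mx_bounded (a b : R) (M : R -> 'M[R]_(p, q)) : a <= b ->
  (forall i j, {within `[a, b], continuous (fun r => M r i j)}) ->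
  exists2 K, 0 <= K & forall r, a <= r <= b -> forall i j, `|M r i j| <= K.
Proof.
move=> ab cM; have [r0 _ r0max] := EVT_max ab (within_continuous_mx_l1 cM).
exists (mx_l1 (M r0)); first exact: mx_l1_ge0.
move=> r rab i j; apply: le_trans (ler_coord_mx_l1 _ i j) _.
by apply: r0max; rewrite in_itv.
Qed.

End mx_l1.

Section integral_equations.
Context {R : realType} (T : R).
Local Notation leb := (@lebesgue_measure R).

Lemma linear_integral_eq0 p q (A : R -> 'M[R]_p) (Z : R -> 'M[R]_(p, q)) tau0 :
  (forall i j, {within `[0, T], continuous (fun r => A r i j)}) ->
  (forall i j, leb.-integrable `[0, T] (EFin \o (fun r => (A r *m Z r) i j))) ->
  0 <= tau0 <= T ->
  (forall s, 0 <= s <= T -> forall i j, Z s i j = oint tau0 s (fun r => (A r *m Z r) i j)) ->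
  forall s, 0 <= s <= T -> Z s = 0.
Proof.
move=> cA intAZ tT ZE.
have T0 : 0 <= T by case/andP: tT => /le_trans; apply.
have [K K0 AK] := within_continuous_mx_bounded T0 cA.
have cZ i j : {within `[0, T], continuous (fun r => Z r i j)}.
  by apply: (within_continuous_integral_form (u0 := 0) (intAZ i j) tT) => s sT; rewrite add0r ZE.
pose g r := mx_l1 (Z r).
have Zt : g tau0 = 0.
  rewrite /g (_ : Z tau0 = 0) ?mx_l1_0 //.
  by apply/matrixP => i j; rewrite ZE // oint_id mxE.
suff gs : forall s, 0 <= s <= T -> g s = 0 by move=> s /gs; exact: mx_l1_eq0.
apply: (@gronwall_zero _ T ((p * q)%:R * (p%:R * K)) g) Zt => //.
- exact: within_continuous_mx_l1.
- by move=> r; exact: mx_l1_ge0.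
- by rewrite mulr_ge0 // mulr_ge0.
move=> a s c aT sT /mx_l1_eq0 Za gc.
have c0 : 0 <= c by apply: le_trans (gc a aT _); [exact: mx_l1_ge0|rewrite subrr normr0].
have Zs i j : `|Z s i j| <= `|s - a| * (p%:R * K * c).
  have -> : Z s i j = oint a s (fun r => (A r *m Z r) i j).
    have Zai : Z a i j = 0 by rewrite Za mxE.
    by rewrite ZE // -(oint_chasles (intAZ i j) tT aT sT) -ZE // Zai add0r.
  apply: ler_norm_oint (intAZ i j) aT sT _ _ => [|r rT ra]; first by rewrite !mulr_ge0.
  have AZk k : `|A r i k * Z r k j| <= K * c.
    rewrite normrM; apply: ler_pM => //; first exact: AK.
    by apply: le_trans (ler_coord_mx_l1 _ k j) _; exact: gc.
  rewrite mxE; apply: le_trans (ler_norm_sum _ _ _) _.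
  apply: le_trans (ler_sum _ (fun k _ => AZk k)) _.
  by rewrite sumr_const card_ord -mulrA mulr_natl.
apply: le_trans (ler_sum _ (fun i _ => ler_sum _ (fun j _ => Zs i j))) _.
rewrite !sumr_const !card_ord -mulrnA -mulr_natl le_eqVlt; apply/orP; left.
by apply/eqP; ring.
Qed.

End integral_equations.

Section state_transition.
Context {R : realType} (n : nat) (T : R) (A : R -> 'M[R]_n) (Phi : R -> R -> 'M[R]_n).
Hypotheses (cA : {within `[0, T], continuous A}) (stm : is_stm T A Phi).
Local Notation leb := (@lebesgue_measure R).

Let cAij i j : {within `[0, T], continuous (fun r => A r i j)}.
Proof. exact: within_continuous_coord. Qed.

Let intF tau : 0 <= tau <= T -> forall i j,
  leb.-integrable `[0, T] (EFin \o (fun r => (A r *m Phi r tau) i j)).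
Proof. by move=> tT; case: (stm tT). Qed.

Let ointF tau s : 0 <= tau <= T -> 0 <= s <= T -> forall i j,
  oint tau s (fun r => (A r *m Phi r tau) i j) = Phi s tau i j - (1%:M : 'M[R]_n) i j.
Proof. by move=> tT sT i j; rewrite ((stm tT).2 s sT) addrC addKr. Qed.

Lemma stm_id tau : 0 <= tau <= T -> Phi tau tau = 1%:M.
Proof.
move=> tT; apply/matrixP => i j.
by apply/eqP; rewrite -subr_eq0 -ointF // oint_id.
Qed.

Lemma stm_mulmx tau s : 0 <= tau <= T -> 0 <= s <= T ->
  Phi s tau *m Phi tau 0 = Phi s 0.
Proof.
move=> tT sT; have T0 : 0 <= T by case/andP: tT => /le_trans; apply.
have zT : (0 : R) <= 0 <= T by rewrite lexx T0.
set c := Phi tau 0.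
pose Z r := Phi r tau *m c - Phi r 0.
have AZE i j : (fun r => (A r *m Z r) i j) =
    (fun r => \sum_(k <- index_enum 'I_n) (A r *m Phi r tau) i k * c k j - (A r *m Phi r 0) i j).
  by apply/funext => r; rewrite mulmxBr mulmxA !mxE.
have intAZ i j : leb.-integrable `[0, T] (EFin \o (fun r => (A r *m Z r) i j)).
  by rewrite AZE; apply: integrable_lincomb => [k|]; exact: intF.
suff /(_ s sT) /eqP : forall s, 0 <= s <= T -> Z s = 0 by rewrite subr_eq0 => /eqP.
apply: (linear_integral_eq0 cAij intAZ tT) => {}s {}sT i j.
rewrite AZE (oint_lincomb (T := T)) //; [|exact: intF..].
have F0E : oint tau s (fun r => (A r *m Phi r 0) i j) = Phi s 0 i j - c i j.
  have := oint_chasles (intF zT i j) zT tT sT; rewrite !ointF // => chasles.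
  by apply: (addrI (c i j - (1%:M : 'M[R]_n) i j)); rewrite chasles; ring.
rewrite F0E; under eq_bigr do rewrite ointF // mulrBl.
rewrite sumrB.
have -> : \sum_k (1%:M : 'M[R]_n) i k * c k j = c i j.
  by rewrite -[in RHS](mul1mx c) [RHS]mxE.
by rewrite !mxE; ring.
Qed.

Lemma stm_unit tau : 0 <= tau <= T -> Phi tau 0 \in unitmx.
Proof.
move=> tT; have zT : (0 : R) <= 0 <= T by rewrite lexx (le_trans (andP tT).1 (andP tT).2).
by have := stm_mulmx tT zT; rewrite stm_id // => /mulmx1_unit[].
Qed.

Lemma stm_continuous i j : 0 <= T ->
  {within `[0, T], continuous (fun t => Phi T t i j)}.
Proof.
move=> T0; have zT : (0 : R) <= 0 <= T by rewrite lexx T0.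
have TT : T \in `[0, T] by rewrite in_itv /= T0 lexx.
have cY a b : {within `[0, T], continuous (fun t => Phi t 0 a b)}.
  by apply: (within_continuous_integral_form (intF zT a b) zT) => s sT; rewrite ((stm zT).2 s sT).
apply: (@subspace_eq_continuous _ _ _ (fun t => (Phi T 0 *m invmx (Phi t 0)) i j)).
  move=> t; rewrite inE /= => tT.
  by rewrite -(stm_mulmx tT TT) mulmxK //; exact: stm_unit.
apply: within_continuous_mulmx => [a b|a b]; first by move=> ?; exact: cvg_cst.
apply/subspace_continuousP => t; rewrite /= => tT.
apply: cvg_invmx => [||a' b']; last exact: (subspace_continuousP _ _).1 (cY a' b') t tT.
- by rewrite near_withinE; apply: nearW => r /=; exact: stm_unit.
- exact: stm_unit.
Qed.

End state_transition.

Section euclidean_norm.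
Context {R : realType} (k : nat).
Implicit Types (u v : 'cV[R]_k).

Lemma cauchy_schwarz (a b : 'I_k -> R) :
  (\sum_i a i * b i) ^+ 2 <= (\sum_i a i ^+ 2) * (\sum_i b i ^+ 2).
Proof.
set A := \sum_i a i ^+ 2; set B := \sum_i a i * b i; set C := \sum_i b i ^+ 2.
have A0 : 0 <= A by apply: sumr_ge0 => i _; exact: sqr_ge0.
have quadE t : \sum_i (t * a i + b i) ^+ 2 = t ^+ 2 * A + (t * B) *+ 2 + C.
  under eq_bigr do rewrite sqrrD.
  rewrite !big_split /= -mulr2n /A /B /C !mulr_sumr.
  congr (_ + _ *+ 2 + _); apply: eq_bigr => i _; first by rewrite exprMn.
  by rewrite mulrA.
have quad_ge0 t : 0 <= t ^+ 2 * A + (t * B) *+ 2 + C.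
  by rewrite -quadE; apply: sumr_ge0 => i _; exact: sqr_ge0.
have [A00|Aneq0] := eqVneq A 0.
  have a0 i : a i = 0.
    apply/eqP; rewrite -sqrf_eq0; apply/eqP.
    by apply: (psumr_eq0P _ A00) => // j _; exact: sqr_ge0.
  have -> : B = 0 by rewrite /B big1 // => i _; rewrite a0 mul0r.
  by rewrite A00 expr0n /= mul0r.
have Agt0 : 0 < A by rewrite lt_def Aneq0 A0.
have tA : (- B / A) * A = - B by rewrite mulrAC -mulrA divff ?mulr1.
(* Evaluate the nonnegative quadratic at its minimiser [t = - B / A]. *)
by have := quad_ge0 (- B / A); rewrite mulr2n expr2; nra.
Qed.

Lemma enorm_ge0 u : 0 <= enorm u.
Proof. exact: sqrtr_ge0. Qed.

Lemma enormN u : enorm (- u) = enorm u.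
Proof. by rewrite /enorm; congr Num.sqrt; apply: eq_bigr => i _; rewrite mxE sqrrN. Qed.

Lemma enormD u v : enorm (u + v) <= enorm u + enorm v.
Proof.
rewrite /enorm.
set A := \sum_i u i 0 ^+ 2; set C := \sum_i v i 0 ^+ 2; set B := \sum_i u i 0 * v i 0.
have A0 : 0 <= A by apply: sumr_ge0 => i _; exact: sqr_ge0.
have C0 : 0 <= C by apply: sumr_ge0 => i _; exact: sqr_ge0.
have -> : \sum_i (u + v) i 0 ^+ 2 = A + B *+ 2 + C.
  by under eq_bigr do rewrite mxE sqrrD; rewrite !big_split /= -mulr2n.
have B_le : B <= Num.sqrt A * Num.sqrt C.
  rewrite -sqrtrM //; apply: le_trans (ler_norm B) _.
  by rewrite -sqrtr_sqr ler_sqrt ?mulr_ge0 // cauchy_schwarz.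
rewrite -[X in _ <= X]ger0_norm ?addr_ge0 ?sqrtr_ge0 // -sqrtr_sqr.
rewrite ler_sqrt ?sqr_ge0 // sqrrD !sqr_sqrtr //.
by rewrite lerD2r lerD2l lerMn2r.
Qed.

Lemma ler_dist_enorm u v : `|enorm u - enorm v| <= enorm (u - v).
Proof.
have := enormD (v - u) u; have := enormD (u - v) v.
rewrite !subrK -[v - u]opprB enormN ler_norml => ? ?.
by apply/andP; split; lra.
Qed.

Lemma enorm_le_mx_l1 u : enorm u <= mx_l1 u.
Proof.
have sum_sqr_le (r : seq 'I_k) (F : 'I_k -> R) :
    \sum_(i <- r) F i ^+ 2 <= (\sum_(i <- r) `|F i|) ^+ 2.
  elim: r => [|a r IH]; first by rewrite !big_nil expr0n.
  rewrite !big_cons sqrrD -real_normK ?num_real //.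
  have S0 : 0 <= \sum_(i <- r) `|F i| by apply: sumr_ge0.
  have : 0 <= `|F a| * (\sum_(i <- r) `|F i|) *+ 2 by rewrite mulrn_wge0 // mulr_ge0.
  lra.
rewrite /enorm /mx_l1 -[X in _ <= X]ger0_norm ?mx_l1_ge0 //.
under [in X in _ <= `|X|]eq_bigr do rewrite big_ord1.
by rewrite -sqrtr_sqr ler_sqrt ?sqr_ge0 //; exact: sum_sqr_le.
Qed.

End euclidean_norm.

Lemma ler_dist_inf {R : realType} (L : Type) (Lam : set L) (F G : L -> R) d :
  Lam !=set0 -> (forall l, 0 <= F l) -> (forall l, 0 <= G l) ->
  (forall l, Lam l -> `|F l - G l| <= d) ->
  `|inf [set F l | l in Lam] - inf [set G l | l in Lam]| <= d.
Proof.
move=> [l0 Ll0] F0 G0 FG.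
have inf_le (H K : L -> R) : (forall l, 0 <= H l) ->
    (forall l, Lam l -> H l - d <= K l) ->
    inf [set H l | l in Lam] - d <= inf [set K l | l in Lam].
  move=> H0 HK; apply: lb_le_inf => [|_ [l Ll <-]]; first by exists (K l0), l0.
  have lbH : has_lbound [set H l | l in Lam] by exists 0 => _ [l' _ <-].
  have := ge_inf lbH (ex_intro2 _ _ l Ll erefl); have := HK l Ll; lra.
rewrite ler_norml; apply/andP; split.
- have : inf [set G l | l in Lam] - d <= inf [set F l | l in Lam].
    by apply: inf_le => // l /FG; rewrite ler_norml => /andP[? ?]; lra.
  lra.
- have : inf [set F l | l in Lam] - d <= inf [set G l | l in Lam].
    by apply: inf_le => // l /FG; rewrite ler_norml => /andP[? ?]; lra.
  lra.
Qed.

Section hull_distance.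
Context {R : realType} (n N : nat).
Implicit Types (M : 'M[R]_n) (x : 'cV[R]_n) (w : 'I_N -> 'cV[R]_n).

Definition hull_dist M x w : R := inf [set enorm (M *m (x - z)) | z in conv_pts w].

Definition simplex : set ('I_N -> R) :=
  [set lam | (forall i, 0 <= lam i) /\ \sum_i lam i = 1].

Lemma simplex_neq0 : (0 < N)%N -> simplex !=set0.
Proof.
move=> N0; exists (fun i => (i == Ordinal N0)%:R); split => [i|]; first exact: ler0n.
by rewrite (bigD1 (Ordinal N0)) //= big1 ?addr0 // => i /negbTE ->.
Qed.

Lemma simplex_le1 lam i : simplex lam -> lam i <= 1.
Proof. by move=> [lam0 <-]; rewrite (bigD1 i) //= lerDl sumr_ge0. Qed.

Lemma hull_distE M x w :
  hull_dist M x w = inf [set enorm (M *m x - \sum_i lam i *: (M *m w i)) | lam in simplex].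
Proof.
have E lam : M *m (x - \sum_i lam i *: w i) = M *m x - \sum_i lam i *: (M *m w i).
  by rewrite mulmxBr mulmx_sumr; congr (_ - _); apply: eq_bigr => i _; rewrite scalemxAr.
congr inf; apply/seteqP; split => y [z].
  by move=> [lam [lam0 [lam1 ->]]] <-; exists lam; rewrite ?E.
by move=> lamS <-; exists (\sum_i z i *: w i); [exists z; case: lamS|rewrite E].
Qed.

Lemma ler_mx_l1_lincomb (d : 'cV[R]_n) (e : 'I_N -> 'cV[R]_n) lam : simplex lam ->
  mx_l1 (d - \sum_i lam i *: e i) <= mx_l1 d + \sum_i mx_l1 (e i).
Proof.
move=> lamS.
have entry a b : `|(d - \sum_i lam i *: e i) a b| <= `|d a b| + \sum_i `|e i a b|.
  rewrite !mxE summxE; apply: le_trans (ler_normB _ _) _; rewrite lerD2l.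
  apply: le_trans (ler_norm_sum _ _ _) _; apply: ler_sum => i _.
  rewrite mxE normrM ger0_norm; last by case: lamS.
  by rewrite ler_piMl // simplex_le1.
apply: le_trans (ler_sum _ (fun a _ => ler_sum _ (fun b _ => entry a b))) _.
rewrite /mx_l1; under eq_bigr do rewrite big_split; rewrite big_split /= lerD2l.
rewrite [X in _ <= X]exchange_big /=; apply: ler_sum => a _.
by rewrite [X in _ <= X]exchange_big.
Qed.

Lemma ler_dist_hull_dist M M0 x x0 w w0 : (0 < N)%N ->
  `|hull_dist M x w - hull_dist M0 x0 w0| <=
  mx_l1 (M *m x - M0 *m x0) + \sum_i mx_l1 (M *m w i - M0 *m w0 i).
Proof.
move=> N0; rewrite !hull_distE.
apply: ler_dist_inf => [|lam|lam|lam lamS]; [exact: simplex_neq0|exact: enorm_ge0..|].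
apply: le_trans (ler_dist_enorm _ _) (le_trans (enorm_le_mx_l1 _) _).
apply: le_trans (ler_mx_l1_lincomb _ _ lamS); rewrite le_eqVlt; apply/orP; left.
apply/eqP; congr mx_l1.
have -> : \sum_i lam i *: (M *m w i - M0 *m w0 i) =
    \sum_i lam i *: (M *m w i) - \sum_i lam i *: (M0 *m w0 i).
  by rewrite -sumrB; apply: eq_bigr => i _; rewrite scalerBr.
by rewrite !opprB addrACA [RHS]addrACA [- _ - _]addrC.
Qed.

End hull_distance.

Lemma within_continuous_hull_dist {R : realType} {X : topologicalType} (S : set X) n N
    (M : X -> 'M[R]_n) (x : X -> 'cV[R]_n) (w : 'I_N -> X -> 'cV[R]_n) : (0 < N)%N ->
  (forall i j, {within S, continuous (fun p => M p i j)}) ->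
  (forall j, {within S, continuous (fun p => x p j 0)}) ->
  (forall i j, {within S, continuous (fun p => w i p j 0)}) ->
  {within S, continuous (fun p => hull_dist (M p) (x p) (fun i => w i p))}.
Proof.
move=> N0 cM cx cw; apply/subspace_continuousP => p0 Sp0.
have c_dev (y : X -> 'cV[R]_n) : (forall j, {within S, continuous (fun p => y p j 0)}) ->
    {within S, continuous (fun p => mx_l1 (M p *m y p - M p0 *m y p0))}.
  move=> cy; apply: within_continuous_mx_l1 => a b.
  have -> : (fun p => (M p *m y p - M p0 *m y p0) a b) =
      (fun p => (M p *m y p) a b - (M p0 *m y p0) a b) by apply/funext => p; rewrite !mxE.
  apply: within_continuousB; last by move=> ?; exact: cvg_cst.
  by apply: within_continuous_mulmx => // c d; rewrite (ord1 d).
pose d p := mx_l1 (M p *m x p - M p0 *m x p0) + \sum_i mx_l1 (M p *m w i p - M p0 *m w i p0).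
have cd : {within S, continuous d}.
  apply: within_continuousD; first exact: c_dev.
  by apply: within_continuous_sum => i; exact: c_dev.
have d_cvg : d p @[p --> within S (nbhs p0)] --> 0.
  have -> : 0 = d p0.
    by rewrite /d subrr mx_l1_0 add0r big1 // => i _; rewrite subrr mx_l1_0.
  exact: (subspace_continuousP _ _).1 cd p0 Sp0.
apply/cvgrPdist_le => e e0; move/cvgrPdist_le: d_cvg => /(_ e e0).
apply: filterS => p; rewrite sub0r normrN ger0_norm; last first.
  by rewrite addr_ge0 ?mx_l1_ge0 // sumr_ge0 // => i _; exact: mx_l1_ge0.
by apply: le_trans; rewrite distrC; exact: ler_dist_hull_dist.
Qed.

Theorem lemma6 (R : realType) (n m l : nat) (T : R)
  (A : R -> 'M[R]_(n, n)) (B : R -> 'M[R]_(n, m)) (E : R -> 'M[R]_(n, l))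
  (U : set 'cV[R]_m) (D : set 'cV[R]_l)
  (Phi : R -> R -> 'M[R]_n)
  (Lg gam : R) (nk : nat) (xbar : 'I_nk -> 'cV[R]_n)
  (w : 'I_nk -> R -> 'cV[R]_n) (xi : 'I_nk -> R -> 'cV[R]_n) :
  0 < T ->
  {within `[0, T], continuous A} ->
  {within `[0, T], continuous B} ->
  {within `[0, T], continuous E} ->
  compact U -> convex_set U -> U !=set0 ->
  compact D -> convex_set D -> D !=set0 ->
  (forall t, 0 <= t <= T ->
     mink_diff (mx_image (B t) U) (mx_image (- E t) D) !=set0) ->
  is_stm T A Phi ->
  0 <= Lg -> (0 < nk)%N ->
  (forall i, adm_ctrl T
     (fun t => mink_diff (mx_image (B t) U) (mx_image (- E t) D)) (w i)) ->
  (forall i, is_sol T A (w i) (xbar i) (xi i)) ->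
  {within [set p : R * 'cV[R]_n | 0 <= p.1 <= T], continuous
     (fun p : R * 'cV[R]_n =>
        Lg * inf [set enorm (Phi T p.1 *m (p.2 - z)) | z in
                   conv_pts (fun i => xi i p.1)] + gam)}.
Proof.
move=> T_gt0 cA _ _ _ _ _ _ _ _ _ stm _ nk_gt0 _ sol.
have TT : T \in `[0, T] by rewrite in_itv /= lexx ltW.
set S := [set p : R * 'cV[R]_n | 0 <= p.1 <= T].
have fstS : fst @` S `<=` `[0, T] by move=> _ [p Sp <-]; rewrite /= in_itv.
have cfst (f : R -> R) : {within `[0, T], continuous f} -> {within S, continuous (fun p => f p.1)}.
  exact: within_continuous_comp_mapsto (fun p => cvg_fst) fstS.
have cxi i j : {within `[0, T], continuous (fun t => xi i t j 0)}.
  have [int_i xiE] := sol i.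
  by apply: (within_continuous_integral_form (int_i j) TT) => t tT; rewrite xiE.
move=> p; apply: cvgD; last exact: cvg_cst.
apply: cvgM; first exact: cvg_cst.
apply: (within_continuous_hull_dist nk_gt0) => [i j|j|i j].
- exact: (cfst (fun t => Phi T t i j) (stm_continuous cA stm (ltW T_gt0))).
- apply: continuous_subspaceT => q Q /(@coord_continuous R _ _ j 0 q.2) Q2.
  exact: (@cvg_snd _ _ (nbhs q.1) (nbhs q.2) _ _ Q2).
- exact: (cfst (fun t => xi i t j 0) (cxi i j)).
Qed.
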